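(* Let $G$ be a finite group and $\varphi\colon T\to S$ a morphism of $G$-Tambara functors. The induced map $\varphi^a\colon\operatorname{Spec}_{\mathbf{Nak}}(S)\to\operatorname{Spec}_{\mathbf{Nak}}(T)$ sends each prime $Q$ of $S$ to its levelwise preimage $\varphi^{-1}(Q)$, where $\varphi^{-1}(Q)(G/H)=\varphi_H^{-1}(Q(G/H))$.
   Context: All rings are commutative with unit. A $G$-Tambara functor consists of commutative rings $T(G/H)$ for subgroups $H\le G$ with restriction ring maps, additive transfer maps, multiplicative norm maps and conjugation isomorphisms satisfying the standard Tambara axioms (Hill–Mazur); a morphism $\varphi\colon T\to S$ is a family of ring maps $\varphi_H$ commuting with all structure maps. A Tambara ideal is a family of ring ideals closed under restriction, transfer, norm and conjugation; proper if $1\notin I(G/G)$. Products of Tambara ideals are generated by levelwise products; the radical $\sqrt I$ has $\sqrt I(G/H)=\{x\mid\langle x\rangle^n\subseteq I\text{ for some }n\ge1\}$, $\langle x\rangle$ the Tambara ideal generated by $x$. A proper ideal $P$ is prime if $IJ\subseteq P$ implies $I\subseteq P$ or $J\subseteq P$. $\operatorname{Spec}_{\mathbf{Nak}}(T)$ is the set of primes with subbasic closed sets $V_H(x)=\{P\mid x\in P(G/H)\}$. $\mathrm{RadId}_G(T)$ is the frame of radical Tambara ideals (inclusion order; joins $\sqrt{\sum I_\lambda}$); each prime $P$ corresponds to the frame point $p_P\colon\mathrm{RadId}_G(T)\to\{0,1\}$ with $p_P(I)=0$ iff $I\subseteq P$, and conversely a point $p$ corresponds to the prime $\bigvee\{I\mid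 p(I)=0\}$. For a Tambara ideal $I$ of $T$, $\varphi_*(I)$ is the Tambara ideal of $S$ generated by the sets $\varphi_H(I(G/H))$, and $\widetilde\varphi(I)=\sqrt{\varphi_*(I)}$ defines a frame homomorphism $\mathrm{RadId}_G(T)\to\mathrm{RadId}_G(S)$. The map $\varphi^a$ sends $Q$ to the prime of $T$ corresponding to the point $p_Q\circ\widetilde\varphi$. *)

(* G-Tambara functors for a finite
   group G, presented algebraically (Hill--Mazur style): G is the whole
   finGroupType gT, and the level G/H is indexed by the subgroup H : {group gT}. *)
From HB Require Import structures.
From mathcomp Require Import all_boot all_order all_algebra all_fingroup.
Set Implicit Arguments.
Unset Strict Implicit.
Unset Printing Implicit Defensive.
Import GRing.Theory.
Local Open Scope ring_scope.

Section Tambara.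
Variable gT : finGroupType.
Implicit Types H K L : {group gT}.

Definition dcoset_reps (L H K : {group gT}) (R : {set gT}) : Prop :=
  R \subset H /\
  forall h, h \in H -> #|R :&: ((L :* h) * K)%g| = 1%N.

(* Phi is a set of representatives of the orbits, under left translation by
   H, of the subsets of gT satisfying P (P is assumed H-stable). *)
Definition orbit_reps (P : {set gT} -> bool) (H : {group gT})
  (Phi : {set {set gT}}) : Prop :=
  (forall S, S \in Phi -> P S) /\
  forall S, P S -> #|[set S' in Phi | [exists h in H, S' == (h *: S)%g]]| = 1%N.

Definition lstab (H : {group gT}) (S : {set gT}) : {group gT} :=
  <<[set h in H | (h *: S)%g == S]>>%G.

(* Subsets S of H that are unions of left K-cosets: functions H/K -> {0,1}. *)
Definition fun_to_2 (H K : {group gT}) (S : {set gT}) : bool :=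
  (S \subset H) && ((S * K)%g == S).

(* Subsets S of H encoding sections H/K -> H/L of the projection H/L -> H/K:
   S is a union of left L-cosets meeting every left K-coset xK (x in H) in
   exactly one left L-coset. *)
Definition section_set (H K L : {group gT}) (S : {set gT}) : bool :=
  [&& S \subset H, (S * L)%g == S &
      [forall x in H, #|S :&: (x *: K)%g| == #|L| ]].

Local Unset Implicit Arguments.
Record tambara := Tambara {
  tcar : {group gT} -> comPzRingType;
  tres : forall H K, tcar H -> tcar K;         (* restriction  T(G/H) -> T(G/K), K <= H *)
  ttr  : forall K H, tcar K -> tcar H;         (* transfer     T(G/K) -> T(G/H), K <= H *)
  tnm  : forall K H, tcar K -> tcar H;         (* norm         T(G/K) -> T(G/H), K <= H *)
  tconj : gT -> forall H K, tcar H -> tcar K;  (* c_g : T(G/H) -> T(G/H^g), K = H^g *)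
  res_id : forall H x, tres H H x = x;
  res_comp : forall H K L x, L \subset K -> K \subset H ->
    tres K L (tres H K x) = tres H L x;
  res_add : forall H K x y, K \subset H -> tres H K (x + y) = tres H K x + tres H K y;
  res_mul : forall H K x y, K \subset H -> tres H K (x * y) = tres H K x * tres H K y;
  res_one : forall H K, K \subset H -> tres H K 1 = 1;
  tr_id : forall H x, ttr H H x = x;
  tr_comp : forall H K L x, L \subset K -> K \subset H ->
    ttr K H (ttr L K x) = ttr L H x;
  tr_add : forall K H x y, K \subset H -> ttr K H (x + y) = ttr K H x + ttr K H y;
  tr_zero : forall K H, K \subset H -> ttr K H 0 = 0;
  nm_id : forall H x, tnm H H x = x;
  nm_comp : forall H K L x, L \subset K -> K \subset H ->
    tnm K H (tnm L K x) = tnm L H x;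
  nm_mul : forall K H x y, K \subset H -> tnm K H (x * y) = tnm K H x * tnm K H y;
  nm_one : forall K H, K \subset H -> tnm K H 1 = 1;
  nm_zero : forall K H, K \subset H -> tnm K H 0 = 0;
  conj_comp : forall (g h : gT) H K L x, K = (H :^ g)%G -> L = (K :^ h)%G ->
    tconj h K L (tconj g H K x) = tconj (g * h)%g H L x;
  conj_in : forall (g : gT) H x, g \in H -> tconj g H H x = x;
  conj_add : forall g H K x y, K = (H :^ g)%G ->
    tconj g H K (x + y) = tconj g H K x + tconj g H K y;
  conj_mul : forall g H K x y, K = (H :^ g)%G ->
    tconj g H K (x * y) = tconj g H K x * tconj g H K y;
  conj_one : forall g H K, K = (H :^ g)%G -> tconj g H K 1 = 1;
  conj_res : forall g H K x, K \subset H ->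
    tconj g K (K :^ g)%G (tres H K x) = tres (H :^ g)%G (K :^ g)%G (tconj g H (H :^ g)%G x);
  conj_tr : forall g H K x, K \subset H ->
    tconj g H (H :^ g)%G (ttr K H x) = ttr (K :^ g)%G (H :^ g)%G (tconj g K (K :^ g)%G x);
  conj_nm : forall g H K x, K \subset H ->
    tconj g H (H :^ g)%G (tnm K H x) = tnm (K :^ g)%G (H :^ g)%G (tconj g K (K :^ g)%G x);
  frobenius : forall K H a b, K \subset H -> ttr K H (a * tres H K b) = ttr K H a * b;
  mackey_tr : forall H K L R a, K \subset H -> L \subset H -> dcoset_reps L H K R ->
    tres H L (ttr K H a) =
    \sum_(h in R) ttr (L :&: K :^ h^-1)%G L
        (tres (K :^ h^-1)%G (L :&: K :^ h^-1)%G (tconj h^-1%g K (K :^ h^-1)%G a));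
  mackey_nm : forall H K L R a, K \subset H -> L \subset H -> dcoset_reps L H K R ->
    tres H L (tnm K H a) =
    \prod_(h in R) tnm (L :&: K :^ h^-1)%G L
        (tres (K :^ h^-1)%G (L :&: K :^ h^-1)%G (tconj h^-1%g K (K :^ h^-1)%G a));
  nm_add : forall H K (Phi : {set {set gT}}) (R : {set gT} -> {set gT}) a b,
    K \subset H -> orbit_reps (fun_to_2 H K) H Phi ->
    (forall S, S \in Phi -> dcoset_reps (lstab H S) H K (R S)) ->
    tnm K H (a + b) =
    \sum_(S in Phi) ttr (lstab H S) H
      (\prod_(h in R S) tnm (lstab H S :&: K :^ h^-1)%G (lstab H S)
         (tres (K :^ h^-1)%G (lstab H S :&: K :^ h^-1)%G
            (tconj h^-1%g K (K :^ h^-1)%G (if h \in S then b else a))));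
  nm_tr : forall H K L (Psi : {set {set gT}}) (R : {set gT} -> {set gT})
      (sel : {set gT} -> gT -> gT) a,
    L \subset K -> K \subset H -> orbit_reps (section_set H K L) H Psi ->
    (forall S, S \in Psi -> dcoset_reps (lstab H S) H K (R S)) ->
    (forall S h, S \in Psi -> h \in R S -> sel S h \in S :&: (h *: K)%g) ->
    tnm K H (ttr L K a) =
    \sum_(S in Psi) ttr (lstab H S) H
      (\prod_(h in R S) tnm (lstab H S :&: K :^ h^-1)%G (lstab H S)
         (tres (L :^ (sel S h)^-1)%G (lstab H S :&: K :^ h^-1)%G
            (tconj (sel S h)^-1%g L (L :^ (sel S h)^-1)%G a)))
}.

Local Set Implicit Arguments.

Record tmorph (T S : tambara) := TMorph {
  tmap : forall H, {rmorphism tcar T H -> tcar S H};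
  tmap_res : forall H K x, K \subset H ->
    tmap K (tres T H K x) = tres S H K (tmap H x);
  tmap_tr : forall K H x, K \subset H ->
    tmap H (ttr T K H x) = ttr S K H (tmap K x);
  tmap_nm : forall K H x, K \subset H ->
    tmap H (tnm T K H x) = tnm S K H (tmap K x);
  tmap_conj : forall g H K x, K = (H :^ g)%G ->
    tmap K (tconj T g H K x) = tconj S g H K (tmap H x)
}.

Definition tfam (T : tambara) := forall H, tcar T H -> Prop.

Definition subI (T : tambara) (I J : tfam T) : Prop := forall H x, I H x -> J H x.

Definition ring_ideal (R : comPzRingType) (P : R -> Prop) : Prop :=
  [/\ P 0, (forall x y, P x -> P y -> P (x + y)) & (forall r x, P x -> P (r * x))].

Definition is_tideal (T : tambara) (I : tfam T) : Prop :=
  [/\ forall H, ring_ideal (I H),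
      forall H K x, K \subset H -> I H x -> I K (tres T H K x),
      forall K H x, K \subset H -> I K x -> I H (ttr T K H x),
      forall K H x, K \subset H -> I K x -> I H (tnm T K H x) &
      forall g H K x, K = (H :^ g)%G -> I H x -> I K (tconj T g H K x)].

Definition tgen (T : tambara) (X : tfam T) : tfam T :=
  fun H x => forall J : tfam T, is_tideal J -> subI X J -> J H x.

Definition tprincipal (T : tambara) (H : {group gT}) (x : tcar T H) : tfam T :=
  tgen (fun K y => forall J : tfam T, J H x -> J K y).

Definition tprod (T : tambara) (I J : tfam T) : tfam T :=
  tgen (fun H z => exists x y, [/\ I H x, J H y & z = x * y]).

Fixpoint tpow (T : tambara) (I : tfam T) (n : nat) : tfam T :=
  match n with
  | 0 => fun _ _ => True
  | n'.+1 => tprod (tpow I n') I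
  end.

Definition trad (T : tambara) (I : tfam T) : tfam T :=
  fun H x => exists n, (1 <= n)%N /\ subI (tpow (tprincipal x) n) I.

Definition is_rad_tideal (T : tambara) (I : tfam T) : Prop :=
  is_tideal I /\ subI (trad I) I.

Definition is_prime_tideal (T : tambara) (P : tfam T) : Prop :=
  [/\ is_tideal P, ~ P [set: gT]%G 1 &
      forall I J : tfam T, is_tideal I -> is_tideal J ->
        subI (tprod I J) P -> subI I P \/ subI J P].

(* Join in the frame RadId_G(T): sqrt of the sum of the family. *)
Definition rjoin (T : tambara) (F : tfam T -> Prop) : tfam T :=
  trad (tgen (fun H x => exists I, F I /\ I H x)).

(* Point p_P of RadId_G(T) attached to P: p_P(I) = 0 iff I <= P. *)
Definition point_zero (T : tambara) (P : tfam T) (I : tfam T) : Prop := subI I P.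

(* The prime attached to a point p (given by its zero set p0):
   \/ { I in RadId_G(T) | p(I) = 0 }. *)
Definition prime_of_point (T : tambara) (p0 : tfam T -> Prop) : tfam T :=
  rjoin (fun I => is_rad_tideal I /\ p0 I).

(* phi_*(I) and the frame map phi~(I) = sqrt(phi_*(I)). *)
Definition tpush (T S : tambara) (phi : tmorph T S) (I : tfam T) : tfam S :=
  tgen (fun H y => exists x, I H x /\ y = tmap phi H x).

Definition ttilde (T S : tambara) (phi : tmorph T S) (I : tfam T) : tfam S :=
  trad (tpush phi I).

(* phi^a(Q): the prime of T attached to the point p_Q o phi~. *)
Definition phi_a (T S : tambara) (phi : tmorph T S) (Q : tfam S) : tfam T :=
  prime_of_point (fun I => point_zero Q (ttilde phi I)).

Definition tpreim (T S : tambara) (phi : tmorph T S) (Q : tfam S) : tfam T :=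
  fun H x => Q H (tmap phi H x).

End Tambara.

From mathcomp Require Import all_boot all_order all_algebra all_fingroup.
From Stdlib Require Import FunctionalExtensionality PropExtensionality.

(* The preimage P of Q is a radical Tambara ideal with sqrt(phi_* P) <= Q, and
   every I with sqrt(phi_* I) <= Q lies in P because phi(I) <= phi_* I; so P is
   the largest radical ideal killed by the point p_Q o phi~, i.e. phi^a(Q).
   P is radical because <x>^n <= P gives
   <phi x>^n <= (phi_* <x>)^n <= phi_* (<x>^n) <= Q, and primes are radical.
   The middle inclusion, phi_* A * phi_* B <= phi_* (A B), is the one place
   where the Tambara structure matters: the elements all of whose conjugates,
   restrictions and norms multiply a restriction-closed family Y into an ideal
   Z form a Tambara ideal.  Closure of that family under sums and transfers is
   where the reciprocity formulas for norms of sums and of transfers, the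
   Mackey formulas and Frobenius reciprocity are used. *)

Set Implicit Arguments.
Unset Strict Implicit.
Unset Printing Implicit Defensive.
Import GRing.Theory.
Local Open Scope ring_scope.

Lemma morph_add0 (U V : zmodType) (f : U -> V) : {morph f : x y / x + y} -> f 0 = 0.
Proof. by move=> fD; apply: (addrI (f 0)); rewrite -fD !addr0. Qed.

Section TambaraIdeals.
Variables (gT : finGroupType) (T : tambara gT).
Implicit Types (H K L : {group gT}) (I J Z : tfam T).
Local Notation res := (tres gT T).
Local Notation tr := (ttr gT T).
Local Notation nm := (tnm gT T).
Local Notation cj := (tconj gT T).

Lemma res0 H K : K \subset H -> res H K 0 = 0.
Proof. by move=> sKH; apply: morph_add0 => x y; apply: res_add. Qed.

Lemma conj0 g H K : K = (H :^ g)%G -> cj g H K 0 = 0.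
Proof. by move=> eK; apply: morph_add0 => x y; apply: conj_add. Qed.

Lemma tfam_ext I J : subI I J -> subI J I -> I = J.
Proof.
move=> sIJ sJI; apply: functional_extensionality_dep => H.
apply: functional_extensionality => x.
by apply: propositional_extensionality; split; [apply: sIJ | apply: sJI].
Qed.

Section IdealClosure.
Variable I : tfam T.
Arguments I : clear implicits.
Hypothesis hI : is_tideal I.

Lemma tideal0 H : I H 0.
Proof. by case: hI => /(_ H) []. Qed.

Lemma tidealD H x y : I H x -> I H y -> I H (x + y).
Proof. by case: hI => /(_ H) [_ hD _] *; apply: hD. Qed.

Lemma tidealM H r x : I H x -> I H (r * x).
Proof. by case: hI => /(_ H) [_ _ hM] *; apply: hM. Qed.

Lemma tideal1 H x : I H 1 -> I H x.
Proof. by rewrite -[x]mulr1; apply: tidealM. Qed.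

Lemma tideal_sum H (A : finType) (P : pred A) (F : A -> tcar gT T H) :
  (forall a, P a -> I H (F a)) -> I H (\sum_(a | P a) F a).
Proof. by apply: big_ind; [apply: tideal0 | apply: tidealD]. Qed.

Lemma tideal_res H K x : K \subset H -> I H x -> I K (res H K x).
Proof. by case: hI => _ hres *; apply: hres. Qed.

Lemma tideal_tr K H x : K \subset H -> I K x -> I H (tr K H x).
Proof. by case: hI => _ _ htr *; apply: htr. Qed.

Lemma tideal_nm K H x : K \subset H -> I K x -> I H (nm K H x).
Proof. by case: hI => _ _ _ hnm *; apply: hnm. Qed.

Lemma tideal_conj g H K x : K = (H :^ g)%G -> I H x -> I K (cj g H K x).
Proof. by case: hI => _ _ _ _ hconj *; apply: hconj. Qed.

End IdealClosure.

Lemma tgen_tideal (X : tfam T) : is_tideal (tgen X).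
Proof.
split=> [H | H K x sKH hx J hJ hX | K H x sKH hx J hJ hX
        | K H x sKH hx J hJ hX | g H K x eK hx J hJ hX].
- split=> [J hJ _ | x y hx hy J hJ hX | r x hx J hJ hX]; first exact: tideal0.
    by apply: tidealD; [| apply: hx | apply: hy].
  by apply: tidealM; last apply: hx.
- by apply: tideal_res; last apply: hx.
- by apply: tideal_tr; last apply: hx.
- by apply: tideal_nm; last apply: hx.
- by apply: tideal_conj; last apply: hx.
Qed.

Lemma sub_tgen (X : tfam T) : subI X (tgen X).
Proof. by move=> H x hx J _; apply. Qed.

Lemma tgen_min (X : tfam T) J : is_tideal J -> subI X J -> subI (tgen X) J.
Proof. by move=> hJ hX H x; apply. Qed.

Lemma tprod_tideal I J : is_tideal (tprod I J).
Proof. exact: tgen_tideal. Qed.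

Lemma tpow_tideal I n : is_tideal (tpow I n).
Proof. by case: n => [|n]; [split | apply: tprod_tideal]. Qed.

Lemma mem_tprincipal H (x : tcar gT T H) : tprincipal x x.
Proof. exact: sub_tgen. Qed.

Lemma tprincipal_min H (x : tcar gT T H) J : is_tideal J -> J H x -> subI (tprincipal x) J.
Proof. by move=> hJ hx; apply: tgen_min => // K y; apply. Qed.

Lemma mem_tprod I J H x y : I H x -> J H y -> tprod I J (x * y).
Proof. by move=> hx hy; apply: sub_tgen; exists x, y. Qed.

Lemma tprod_min I J Z : is_tideal Z ->
  (forall H x y, I H x -> J H y -> Z H (x * y)) -> subI (tprod I J) Z.
Proof. by move=> hZ hIJ; apply: tgen_min => // H _ [x [y [hx hy ->]]]; apply: hIJ. Qed.

Lemma tprodS I I' J J' : subI I I' -> subI J J' -> subI (tprod I J) (tprod I' J').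
Proof.
move=> sI sJ; apply: tprod_min; first exact: tprod_tideal.
by move=> H x y hx hy; apply: mem_tprod; [apply: sI | apply: sJ].
Qed.

Lemma tideal_sub_trad Z : is_tideal Z -> subI Z (trad Z).
Proof.
move=> hZ H x hx; exists 1%N; split=> //=.
apply: tprod_min => // K r y _ hy; apply: tidealM => //.
exact: tprincipal_min hy.
Qed.

Lemma sub_rjoin (F : tfam T -> Prop) I : F I -> subI I (rjoin F).
Proof.
move=> FI H x hx; apply: tideal_sub_trad; first exact: tgen_tideal.
by apply: sub_tgen; exists I.
Qed.

Lemma rjoin_min (F : tfam T -> Prop) J : is_rad_tideal J ->
  (forall I, F I -> subI I J) -> subI (rjoin F) J.
Proof.
case=> hJ radJ sFJ H x [n [n_gt0 hn]]; apply: radJ; exists n; split=> //.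
move=> K y /hn; apply: tgen_min => // L z [I [FI hz]].
exact: sFJ hz.
Qed.

Lemma prime_tideal_rad (Q : tfam T) : is_prime_tideal Q -> is_rad_tideal Q.
Proof.
case=> hQ Q1 primeQ; split=> // H y [n [_ hn]].
suff: subI (tprincipal y) Q by apply; apply: mem_tprincipal.
elim: n hn => [/(_ [set: gT]%G 1 I) // | n IHn /= hn].
by case: (primeQ _ _ (tpow_tideal _ n) (tgen_tideal _) hn).
Qed.

End TambaraIdeals.

Section GroupFacts.
Variable gT : finGroupType.
Implicit Types H K L : {group gT}.
Local Open Scope group_scope.

Lemma mem_dcoset L K (h x : gT) :
  reflect (exists l k, [/\ l \in L, k \in K & x = l * h * k]) (x \in L :* h * K).
Proof.
apply: (iffP mulsgP) => [[y k /rcosetP[l lL ->] kK ->]|[l [k [lL kK ->]]]].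
  by exists l, k.
by exists (l * h) k => //; apply/rcosetP; exists l.
Qed.

Lemma dcoset_self L K (h : gT) : h \in L :* h * K.
Proof. by apply/mem_dcoset; exists 1, 1; rewrite !group1 mulg1 mul1g. Qed.

Lemma dcoset_eq L K (h y : gT) : y \in L :* h * K -> L :* y * K = L :* h * K.
Proof.
case/mem_dcoset=> l [k [lL kK ->]]; apply/setP=> x; apply/mem_dcoset/mem_dcoset.
  case=> l1 [k1 [l1L k1K ->]]; exists (l1 * l), (k * k1).
  by rewrite !groupM // !mulgA.
case=> l1 [k1 [l1L k1K ->]]; exists (l1 * l^-1), (k^-1 * k1).
by rewrite !groupM ?groupV // !mulgA mulgKV mulgK.
Qed.

Definition dcoset_transversal L H K := [set repr (L :* h * K) | h in H].

Lemma dcoset_reps_transversal L H K : L \subset H -> K \subset H ->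
  dcoset_reps L H K (dcoset_transversal L H K).
Proof.
have repr_dcoset h : repr (L :* h * K) \in L :* h * K.
  exact: mem_repr (dcoset_self L K h).
move=> sLH sKH; split.
  apply/subsetP=> _ /imsetP[h hH ->].
  case/mem_dcoset: (repr_dcoset h) => l [k [lL kK ->]].
  by rewrite !groupM // ?(subsetP sLH _ lL) ?(subsetP sKH _ kK).
move=> h hH; apply/eqP/cards1P; exists (repr (L :* h * K)); apply/setP=> x.
rewrite !inE; apply/andP/eqP=> [[/imsetP[h1 h1H ->] hx] | ->].
  by rewrite -(dcoset_eq hx) (dcoset_eq (repr_dcoset h1)).
by split; [apply/imsetP; exists h | apply: repr_dcoset].
Qed.

Lemma dcoset_reps_witness L H K R : dcoset_reps L H K R -> exists r, r \in R.
Proof.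
case=> _ /(_ 1 (group1 H)) /eqP/cards1P[r /setP /(_ r)].
by rewrite !inE eqxx => /andP[rR _]; exists r.
Qed.

Lemma orbit_reps_exist (P : {set gT} -> bool) H : exists Phi, orbit_reps P H Phi.
Proof.
pose orb (S : {set gT}) := [set h *: S | h in H].
pose rep (S : {set gT}) := odflt S [pick S' in orb S | P S'].
have orbS S : S \in orb S by apply/imsetP; exists 1; rewrite ?group1 ?lcoset1.
have orb_eq S S' : S' \in orb S -> orb S' = orb S.
  case/imsetP=> h hH ->; apply/setP=> X; apply/imsetP/imsetP=> [[u uH ->]|[u uH ->]].
    by exists (u * h); rewrite ?groupM // lcosetM.
  by exists (u * h^-1); rewrite ?groupM ?groupV // -lcosetM mulgKV.
have repP S : P S -> rep S \in orb S /\ P (rep S).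
  move=> PS; rewrite /rep; case: pickP => [S' /andP[] // | /(_ S)].
  by rewrite orbS PS.
have rep_eq S S' : P S -> orb S' = orb S -> rep S' = rep S.
  move=> PS eSS'; rewrite /rep eSS'; case: pickP => // /(_ S).
  by rewrite orbS PS.
exists [set rep S | S in [set S | P S]]; split.
  by move=> X /imsetP[S]; rewrite inE => PS ->; case: (repP S PS).
move=> S PS; apply/eqP/cards1P; exists (rep S); apply/setP=> X.
rewrite !inE; apply/andP/eqP=> [[/imsetP[S1] ]|->].
  rewrite inE => /repP[/orb_eq o1 _] -> /existsP[h /andP[hH /eqP eX]].
  by apply: rep_eq PS _; rewrite -o1 eX; apply: orb_eq; apply/imsetP; exists h.
split; first by apply/imsetP; exists S; rewrite ?inE.
have [/imsetP[h hH eh] _] := repP S PS.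
by apply/existsP; exists h; rewrite hH eh eqxx.
Qed.

Lemma conjG1 H : H = (H :^ 1)%G.
Proof. by apply: val_inj; rewrite /= conjsg1. Qed.

Lemma conjGM H (g h : gT) : ((H :^ g) :^ h)%G = (H :^ (g * h))%G.
Proof. by apply: val_inj; rewrite /= conjsgM. Qed.

Lemma lstab_sub H S : lstab H S \subset H.
Proof. by rewrite gen_subG; apply/subsetP=> x; rewrite inE => /andP[]. Qed.

Lemma lstab_fixes H S u : u \in lstab H S -> u *: S = S.
Proof.
have stab_group : group_set [set u : gT | u *: S == S].
  apply/group_setP; split=> [|x y]; first by rewrite inE lcoset1.
  by rewrite !inE => /eqP ex /eqP ey; rewrite lcosetM ey ex.
have: lstab H S \subset Group stab_group.
  by rewrite gen_subG; apply/subsetP=> x; rewrite !inE => /andP[].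
by move/subsetP/[apply]; rewrite inE => /eqP.
Qed.

Lemma section_set_lstab H K L S h s : L \subset K -> section_set H K L S -> h \in H ->
  s \in S :&: h *: K -> lstab H S :&: K :^ h^-1 \subset L :^ s^-1.
Proof.
move=> sLK /and3P[_ /eqP eSL /forallP cardS] hH /setIP[sS shK].
have fibre_s : S :&: h *: K = s *: L.
  apply/eqP; rewrite eq_sym eqEcard; apply/andP; split.
    apply/subsetP=> x; rewrite mem_lcoset => xL; rewrite inE; apply/andP; split.
      by rewrite -eSL -[x](mulKVg s); apply: mem_mulg.
    rewrite mem_lcoset -[x](mulKVg s) mulgA; apply: groupM.
      by rewrite -mem_lcoset.
    exact: (subsetP sLK).
  by have := cardS h; rewrite hH /= => /eqP ->; rewrite card_lcoset.
apply/subsetP=> u /setIP[/lstab_fixes uS]; rewrite !mem_conjg !invgK => uK.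
have: u * s \in S :&: h *: K.
  rewrite inE -{1}uS mem_lcoset mulKg sS /= mem_lcoset.
  have -> : h^-1 * (u * s) = u ^ h * (h^-1 * s) by rewrite /conjg !mulgA mulgK.
  by apply: groupM => //; rewrite -mem_lcoset.
by rewrite fibre_s mem_lcoset /conjg mulgA.
Qed.

End GroupFacts.

Section NormAbsorbing.
Variables (gT : finGroupType) (T : tambara gT).
Implicit Types H K L M N : {group gT}.
Local Notation res := (tres gT T).
Local Notation tr := (ttr gT T).
Local Notation nm := (tnm gT T).
Local Notation cj := (tconj gT T).

Variables X Y Z : tfam T.
Arguments X : clear implicits.
Arguments Y : clear implicits.
Arguments Z : clear implicits.
Hypothesis hZ : is_tideal Z.
Hypothesis Xres : forall H K x, K \subset H -> X H x -> X K (res H K x).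
Hypothesis Xconj : forall g H K x, K = (H :^ g)%G -> X H x -> X K (cj g H K x).
Hypothesis Xnm : forall K H x, K \subset H -> X K x -> X H (nm K H x).
Hypothesis Yres : forall H K y, K \subset H -> Y H y -> Y K (res H K y).
Hypothesis mulXY : forall H x y, X H x -> Y H y -> Z H (x * y).

Definition absorbing N (u : tcar gT T N) :=
  forall g K N', K = (N :^ g)%G -> N' \subset K ->
  forall y, Y N' y -> Z N' (res K N' (cj g N K u) * y).

Definition norm_absorbing L (w : tcar gT T L) :=
  forall g K M N, K = (L :^ g)%G -> M \subset K -> M \subset N ->
  absorbing (nm M N (res K M (cj g L K w))).

Lemma absorbing0 N : absorbing (0 : tcar gT T N).
Proof.
move=> g K N' eK sN'K y _; rewrite conj0 // res0 // mul0r; exact: tideal0.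
Qed.

Lemma absorbingD N (u v : tcar gT T N) : absorbing u -> absorbing v -> absorbing (u + v).
Proof.
move=> hu hv g K N' eK sN'K y hy; rewrite conj_add // res_add // mulrDl.
by apply: tidealD => //; [apply: hu | apply: hv].
Qed.

Lemma absorbingM N r (u : tcar gT T N) : absorbing u -> absorbing (r * u).
Proof.
move=> hu g K N' eK sN'K y hy; rewrite conj_mul // res_mul // -mulrA.
by apply: tidealM => //; apply: hu.
Qed.

Lemma absorbing_sum N (A : finType) (P : pred A) (F : A -> tcar gT T N) :
  (forall a, P a -> absorbing (F a)) -> absorbing (\sum_(a | P a) F a).
Proof. by apply: big_ind; [apply: absorbing0 | apply: absorbingD]. Qed.

Lemma absorbing_prod N (A : finType) (P : pred A) (F : A -> tcar gT T N) a0 :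
  P a0 -> absorbing (F a0) -> absorbing (\prod_(a | P a) F a).
Proof. by move=> Pa0 ha0; rewrite (bigD1 a0) //= mulrC; apply: absorbingM. Qed.

Lemma absorbing_tr M N (u : tcar gT T M) :
  M \subset N -> absorbing u -> absorbing (tr M N u).
Proof.
move=> sMN hu g K N' -> sN'K y hy.
have sMg : (M :^ g)%G \subset (N :^ g)%G by rewrite conjSg.
rewrite conj_tr // (mackey_tr _ _ _ _ _ _ _ sMg sN'K (dcoset_reps_transversal sN'K sMg)).
rewrite mulr_suml; apply: tideal_sum => // r _.
rewrite -frobenius ?subsetIl //; apply: tideal_tr; rewrite ?subsetIl //.
rewrite conj_comp //; apply: hu; [exact: conjGM | exact: subsetIr |].
by apply: Yres => //; exact: subsetIl.
Qed.

Lemma absorbing_nm M N (u : tcar gT T M) :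
  M \subset N -> norm_absorbing u -> absorbing (nm M N u).
Proof.
move=> sMN /(_ 1%g M M N (conjG1 M) (subxx _) sMN).
by rewrite res_id conj_in ?group1.
Qed.

Lemma norm_absorbingW L (w : tcar gT T L) : norm_absorbing w -> absorbing w.
Proof. by move/(absorbing_nm (subxx L)); rewrite nm_id. Qed.

Lemma norm_absorbing0 L : norm_absorbing (0 : tcar gT T L).
Proof.
move=> g K M N eK sMK sMN; rewrite conj0 // res0 // nm_zero //; exact: absorbing0.
Qed.

Lemma norm_absorbingM L r (w : tcar gT T L) : norm_absorbing w -> norm_absorbing (r * w).
Proof.
move=> hw g K M N eK sMK sMN; rewrite conj_mul // res_mul // nm_mul //.
by apply: absorbingM; apply: hw.
Qed.

Lemma norm_absorbing_res L L' (w : tcar gT T L) :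
  L' \subset L -> norm_absorbing w -> norm_absorbing (res L L' w).
Proof.
move=> sL'L hw g K M N -> sMK sMN; rewrite conj_res // res_comp ?conjSg //.
by apply: hw => //; apply: subset_trans sMK _; rewrite conjSg.
Qed.

Lemma norm_absorbing_conj h H K (w : tcar gT T H) :
  K = (H :^ h)%G -> norm_absorbing w -> norm_absorbing (cj h H K w).
Proof.
move=> eK hw g K' M N eK' sMK' sMN; rewrite conj_comp //.
by apply: hw => //; rewrite eK' eK conjGM.
Qed.

Lemma norm_absorbing_nm L L' (w : tcar gT T L) :
  L \subset L' -> norm_absorbing w -> norm_absorbing (nm L L' w).
Proof.
move=> sLL' hw g K M N -> sMK sMN.
have sLg : (L :^ g)%G \subset (L' :^ g)%G by rewrite conjSg.
have reps := dcoset_reps_transversal sMK sLg.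
rewrite conj_nm // (mackey_nm _ _ _ _ _ _ _ sLg sMK reps).
rewrite (big_morph (nm M N) (fun x y => nm_mul _ _ _ _ x y sMN) (nm_one _ _ _ _ sMN)).
have [r0 r0R] := dcoset_reps_witness reps.
apply: (absorbing_prod r0R); rewrite nm_comp ?subsetIl //.
apply: (norm_absorbing_conj _ hw) => //; first exact: subsetIr.
exact: subset_trans (subsetIl _ _) sMN.
Qed.

Lemma norm_absorbingD L (w1 w2 : tcar gT T L) :
  norm_absorbing w1 -> norm_absorbing w2 -> norm_absorbing (w1 + w2).
Proof.
move=> hw1 hw2 g K M N -> sMK sMN; rewrite conj_add // res_add //.
have [Phi hPhi] := orbit_reps_exist (fun_to_2 N M) N.
have reps S : dcoset_reps (lstab N S) N M (dcoset_transversal (lstab N S) N M).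
  exact: dcoset_reps_transversal (lstab_sub N S) sMN.
rewrite (nm_add _ _ _ _ _ _ _ _ sMN hPhi (fun S _ => reps S)).
apply: absorbing_sum => S _; apply: absorbing_tr; first exact: lstab_sub.
have [h0 h0R] := dcoset_reps_witness (reps S).
apply: (absorbing_prod h0R).
have hres w : norm_absorbing w -> norm_absorbing (res (L :^ g)%G M (cj g L (L :^ g)%G w)).
  by move=> hw; apply: norm_absorbing_res => //; apply: norm_absorbing_conj.
case: (h0 \in S); [apply: (hres _ hw2) | apply: (hres _ hw1)];
  by rewrite ?subsetIr ?subsetIl.
Qed.

Lemma norm_absorbing_sum L (A : finType) (P : pred A) (F : A -> tcar gT T L) :
  (forall a, P a -> norm_absorbing (F a)) -> norm_absorbing (\sum_(a | P a) F a).
Proof. by apply: big_ind; [apply: norm_absorbing0 | apply: norm_absorbingD]. Qed.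

Lemma absorbing_nm_tr L K N (v : tcar gT T L) : L \subset K -> K \subset N ->
  norm_absorbing v -> absorbing (nm K N (tr L K v)).
Proof.
move=> sLK sKN hv.
have [Psi hPsi] := orbit_reps_exist (section_set N K L) N.
have reps S : dcoset_reps (lstab N S) N K (dcoset_transversal (lstab N S) N K).
  exact: dcoset_reps_transversal (lstab_sub N S) sKN.
have repsN S h : h \in dcoset_transversal (lstab N S) N K -> h \in N.
  by have [/subsetP sRN _] := reps S; apply: sRN.
have sel S h : S \in Psi -> h \in dcoset_transversal (lstab N S) N K ->
    repr (S :&: (h *: K)%g) \in S :&: (h *: K)%g.
  move=> SPsi /repsN hN; have /and3P[_ _ /forallP /(_ h)] := hPsi.1 S SPsi.
  rewrite hN => /eqP cardSh.
  have: (0 < #|S :&: (h *: K)%g|)%N by rewrite cardSh cardG_gt0.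
  by case/card_gt0P=> x xS; apply: mem_repr xS.
rewrite (nm_tr _ _ _ _ _ _ _ _ v sLK sKN hPsi (fun S _ => reps S) sel).
apply: absorbing_sum => S SPsi; apply: absorbing_tr; first exact: lstab_sub.
have [h0 h0R] := dcoset_reps_witness (reps S).
apply: (absorbing_prod h0R); apply: hv => //; last exact: subsetIl.
apply: section_set_lstab sLK (hPsi.1 S SPsi) (repsN _ _ h0R) _.
exact: sel.
Qed.

Lemma norm_absorbing_tr L L' (w : tcar gT T L) :
  L \subset L' -> norm_absorbing w -> norm_absorbing (tr L L' w).
Proof.
move: {2}#|L'| (leqnn #|L'|) => n; elim: n => [|n IHn] in L L' w *.
  by rewrite leqn0 => /eqP L'0; have := cardG_gt0 L'; rewrite L'0.
move=> leL'n sLL' hw g K M N -> sMK sMN; rewrite conj_tr //.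
(* Mackey turns the restriction of the transfer into transfers to groups
   smaller than L', except when M is all of L'^g; there the reciprocity
   formula for the norm of a transfer is needed instead. *)
have sLg : (L :^ g)%G \subset (L' :^ g)%G by rewrite conjSg.
have [eqM|ltML'] : M = (L' :^ g)%G \/ (#|M| < #|L'|)%N.
  case: (eqVneq #|M| #|(L' :^ g)%g|) => [eqML'|neqML'].
    by left; apply: val_inj; apply/eqP; rewrite eqEcard sMK eqML' /=.
  by right; rewrite -(cardJg L' g) ltn_neqAle neqML' subset_leq_card.
  subst M; rewrite res_id; apply: absorbing_nm_tr => //.
  exact: norm_absorbing_conj.
rewrite (mackey_tr _ _ _ _ _ _ _ sLg sMK (dcoset_reps_transversal sMK sLg)).
apply: absorbing_nm => //; apply: norm_absorbing_sum => r _.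
apply: IHn; [by rewrite -ltnS; apply: leq_trans ltML' _ | exact: subsetIl |].
apply: norm_absorbing_res; first exact: subsetIr.
by apply: norm_absorbing_conj => //; apply: norm_absorbing_conj.
Qed.

Lemma norm_absorbing_tideal : is_tideal (@norm_absorbing).
Proof.
split=> [L | H K w | K H w | K H w | g H K w].
- by split; [apply: norm_absorbing0 | apply: norm_absorbingD | apply: norm_absorbingM].
- exact: norm_absorbing_res.
- exact: norm_absorbing_tr.
- exact: norm_absorbing_nm.
- exact: norm_absorbing_conj.
Qed.

Lemma mem_norm_absorbing L (x : tcar gT T L) : X L x -> norm_absorbing x.
Proof.
move=> hx g K M N eK sMK sMN g' K' N' eK' sN'K' y hy.
apply: mulXY => //; apply: Xres => //; apply: Xconj => //.
by apply: Xnm => //; apply: Xres => //; apply: Xconj.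
Qed.

Lemma tgen_mul_sub L (w y : tcar gT T L) : tgen X w -> Y L y -> Z L (w * y).
Proof.
move=> /(tgen_min norm_absorbing_tideal mem_norm_absorbing) /norm_absorbingW hw hy.
by have := hw 1%g L L (conjG1 L) (subxx _) y hy; rewrite res_id conj_in ?group1.
Qed.

End NormAbsorbing.

Section Pushforward.
Variables (gT : finGroupType) (T S : tambara gT) (phi : tmorph T S).
Implicit Types (H K : {group gT}) (I A B : tfam T) (Z : tfam S).
Local Notation f := (tmap phi).

Lemma tpreim_tideal Z : is_tideal Z -> is_tideal (tpreim phi Z).
Proof.
move=> hZ; split=> [H | H K x sKH | K H x sKH | K H x sKH | g H K x eK]; rewrite /tpreim.
- split=> [|x y|r x]; rewrite ?rmorph0 ?rmorphD ?rmorphM.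
  + exact: tideal0.
  + exact: tidealD.
  + exact: tidealM.
- by rewrite tmap_res //; apply: tideal_res.
- by rewrite tmap_tr //; apply: tideal_tr.
- by rewrite tmap_nm //; apply: tideal_nm.
- by rewrite tmap_conj //; apply: tideal_conj.
Qed.

Definition timage I : tfam S := fun H y => exists x, I H x /\ y = f H x.

Lemma tpush_tideal I : is_tideal (tpush phi I).
Proof. exact: tgen_tideal. Qed.

Lemma mem_tpush I H x : I H x -> tpush phi I (f H x).
Proof. by move=> hx; apply: sub_tgen; exists x. Qed.

Lemma tpush_min I Z : is_tideal Z -> subI I (tpreim phi Z) -> subI (tpush phi I) Z.
Proof. by move=> hZ sIZ; apply: tgen_min => // H _ [x [hx ->]]; apply: sIZ. Qed.

Section ImageClosure.
Variable I : tfam T.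
Hypothesis hI : is_tideal I.

Lemma timage_res H K y : K \subset H -> timage I y -> timage I (tres gT S H K y).
Proof.
move=> sKH [x [hx ->]]; exists (tres gT T H K x).
by rewrite tmap_res //; split=> //; apply: tideal_res.
Qed.

Lemma timage_conj g H K y : K = (H :^ g)%G -> timage I y -> timage I (tconj gT S g H K y).
Proof.
move=> eK [x [hx ->]]; exists (tconj gT T g H K x).
by rewrite tmap_conj //; split=> //; apply: tideal_conj.
Qed.

Lemma timage_nm K H y : K \subset H -> timage I y -> timage I (tnm gT S K H y).
Proof.
move=> sKH [x [hx ->]]; exists (tnm gT T K H x).
by rewrite tmap_nm //; split=> //; apply: tideal_nm.
Qed.

End ImageClosure.

Lemma tpush_tprod A B : is_tideal A -> is_tideal B ->
  subI (tprod (tpush phi A) (tpush phi B)) (tpush phi (tprod A B)).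
Proof.
move=> hA hB; have hAB := tpush_tideal (tprod A B).
(* First generators against generators; then, as Y need only be closed under
   restriction, the generators of phi_* B against all of phi_* A. *)
have mul_timage H w y : tpush phi A w -> timage B y -> tpush phi (tprod A B) (w * y).
  apply: (tgen_mul_sub hAB) => [||||K _ _ [a [ha ->]] [b [hb ->]]].
  - exact: timage_res.
  - exact: timage_conj.
  - exact: timage_nm.
  - exact: timage_res.
  - by rewrite -rmorphM; apply: mem_tpush; apply: mem_tprod.
apply: tprod_min => // H w w' hw hw'; rewrite mulrC.
apply: (tgen_mul_sub hAB _ _ _ _ _ hw' hw) => [||||K y x hy hx].
- exact: timage_res.
- exact: timage_conj.
- exact: timage_nm.
- exact: tideal_res (tpush_tideal A).
- by rewrite mulrC; apply: mul_timage.
Qed.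

Lemma tpush_tprincipal H (x : tcar gT T H) :
  subI (tprincipal (f H x)) (tpush phi (tprincipal x)).
Proof.
by apply: tprincipal_min; [apply: tpush_tideal | apply: mem_tpush; apply: mem_tprincipal].
Qed.

Lemma tpush_tpow H (x : tcar gT T H) n :
  subI (tpow (tprincipal (f H x)) n) (tpush phi (tpow (tprincipal x) n)).
Proof.
elim: n => [|n IHn] K y.
  move=> _; apply: (tideal1 (tpush_tideal _)).
  by rewrite -(rmorph1 (f K)); apply: mem_tpush.
move=> /(tprodS IHn (tpush_tprincipal (x := x))).
by apply: tpush_tprod; [apply: tpow_tideal | apply: tgen_tideal].
Qed.

Section PrimePreimage.
Variable Q : tfam S.
Hypothesis primeQ : is_prime_tideal Q.

Lemma tpreim_rad : is_rad_tideal (tpreim phi Q).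
Proof.
have [hQ radQ] := prime_tideal_rad primeQ.
split=> [|H x [n [n_gt0 hn]]]; first exact: tpreim_tideal.
apply: radQ; exists n; split=> // K y /(tpush_tpow (x := x) (n := n)).
exact: (tpush_min hQ hn).
Qed.

Lemma ttilde_tpreim : subI (ttilde phi (tpreim phi Q)) Q.
Proof.
have [hQ radQ] := prime_tideal_rad primeQ.
move=> H y [n [n_gt0 hn]]; apply: radQ; exists n; split=> // K z /hn.
by apply: tpush_min.
Qed.

Lemma sub_tpreim I : subI (ttilde phi I) Q -> subI I (tpreim phi Q).
Proof.
move=> sIQ H x hx; apply: sIQ; apply: tideal_sub_trad; first exact: tpush_tideal.
exact: mem_tpush.
Qed.

End PrimePreimage.
End Pushforward.

Unset Implicit Arguments.

Theorem proposition6p13 (gT : finGroupType) (T S : tambara gT)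
  (phi : tmorph T S) (Q : tfam S) :
  is_prime_tideal Q -> phi_a phi Q = tpreim phi Q.
Proof.
move=> primeQ; apply: tfam_ext.
  apply: rjoin_min => [|I [_]]; first exact: tpreim_rad.
  exact: sub_tpreim.
by apply: sub_rjoin; split; [apply: tpreim_rad | apply: ttilde_tpreim].
Qed.
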